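(* Let $d\ge 2$ and $n_1,\ldots,n_d\ge 1$ be integers, and let $\mathcal{T}\in\mathbb{R}^{n_1\times\cdots\times n_d}$, $\mathcal{T}\neq 0$. Let $[d]=\bigcup_{j=1}^m\alpha_j$ be the symmetric decomposition for $\mathcal{T}$. Then there exists a best rank one approximation $\mathcal{A}$ of $\mathcal{T}$ such that $\mathcal{A}$ is symmetric with respect to each $\alpha_j$, $j\in[m]$.
   Context: $[d]=\{1,\ldots,d\}$. $\mathbb{R}^{n_1\times\cdots\times n_d}=\otimes_{j=1}^d\mathbb{R}^{n_j}$ is the space of real $d$-tensors $\mathcal{T}=[t_{i_1,\ldots,i_d}]$, with inner product $\langle\mathcal{S},\mathcal{T}\rangle=\sum s_{i_1,\ldots,i_d}t_{i_1,\ldots,i_d}$ and norm $\|\mathcal{T}\|=\sqrt{\langle\mathcal{T},\mathcal{T}\rangle}$. For $\mathbf{x}_j\in\mathbb{R}^{n_j}$, $\otimes_{j=1}^d\mathbf{x}_j$ is the tensor with entries $\prod_{j=1}^d x_{i_j,j}$. $\mathrm{S}^{n-1}$ is the unit sphere in $\mathbb{R}^n$ (Euclidean norm). A best rank one approximation of $\mathcal{T}$ is a tensor $a\otimes_{j=1}^d\mathbf{u}_j$ with $a\in\mathbb{R}$, $\mathbf{u}_j\in\mathrm{S}^{n_j-1}$, attaining $\min_{s\in\mathbb{R},\,\mathbf{x}_j\in\mathrm{S}^{n_j-1}}\|\mathcal{T}-s\otimes_{j=1}^d\mathbf{x}_j\|$. For $\alpha\subseteq[d]$ with $|\alpha|\ge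 2$, a tensor is symmetric with respect to $\alpha$ if $n_p=n_q$ for all $p,q\in\alpha$ and its entry $t_{i_1,\ldots,i_d}$ is unchanged when any two indices $i_p,i_q$ with $p,q\in\alpha$ are interchanged; every tensor is by convention symmetric with respect to each singleton $\{i\}$. The symmetric decomposition of $\mathcal{T}$ is the unique partition $[d]=\bigcup_{j=1}^m\alpha_j$ into nonempty disjoint sets such that $\mathcal{T}$ is symmetric with respect to each $\alpha_j$, and for $j\neq k$, $p\in\alpha_j$, $q\in\alpha_k$, $\mathcal{T}$ is not symmetric with respect to $\{p,q\}$. *)

From HB Require Import structures.
From mathcomp Require Import all_boot all_order all_algebra.
From mathcomp Require Import reals.
Set Implicit Arguments. Unset Strict Implicit. Unset Printing Implicit Defensive.
Import Order.TTheory GRing.Theory Num.Theory.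
Local Open Scope ring_scope.

Definition idx (d : nat) (n : 'I_d -> nat) := {dffun forall j : 'I_d, 'I_(n j)}.

Definition tensor (R : realType) (d : nat) (n : 'I_d -> nat) := idx n -> R.

Definition tinner (R : realType) d (n : 'I_d -> nat) (S T : tensor R n) : R :=
  \sum_(i : idx n) S i * T i.

Definition tnorm (R : realType) d (n : 'I_d -> nat) (T : tensor R n) : R :=
  Num.sqrt (tinner T T).

Definition tsub (R : realType) d (n : 'I_d -> nat) (S T : tensor R n) : tensor R n :=
  fun i => S i - T i.

Definition rank1 (R : realType) d (n : 'I_d -> nat) (s : R)
  (x : forall j : 'I_d, 'I_(n j) -> R) : tensor R n :=
  fun i => s * \prod_(j < d) x j (i j).

Definition on_sphere (R : realType) m (x : 'I_m -> R) : Prop :=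
  Num.sqrt (\sum_(k < m) x k ^+ 2) = 1.

Definition best_rank1 (R : realType) d (n : 'I_d -> nat) (T A : tensor R n) : Prop :=
  exists (a : R) (u : forall j : 'I_d, 'I_(n j) -> R),
    (forall j, on_sphere (u j)) /\ A = rank1 a u /\
    forall (s : R) (x : forall j : 'I_d, 'I_(n j) -> R),
      (forall j, on_sphere (x j)) -> tnorm (tsub T A) <= tnorm (tsub T (rank1 s x)).

(* T is symmetric with respect to alpha: all n_p (p in alpha) equal, and the
   entry is unchanged when interchanging i_p and i_q for p, q in alpha.
   i' is the multi-index obtained from i by interchanging the p-th and q-th
   entries (compared as natural numbers, as n_p = n_q). For a singleton alpha
   the condition is trivially true, matching the convention. *)
Definition tsym (R : realType) d (n : 'I_d -> nat) (T : tensor R n)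
  (alpha : {set 'I_d}) : Prop :=
  forall p q, p \in alpha -> q \in alpha ->
    n p = n q /\
    forall i i' : idx n,
      (i' p : nat) = i q -> (i' q : nat) = i p ->
      (forall k, k != p -> k != q -> i' k = i k) ->
      T i' = T i.

Definition sym_decomposition (R : realType) d (n : 'I_d -> nat) (T : tensor R n)
  (P : {set {set 'I_d}}) : Prop :=
  partition P [set: 'I_d] /\
  (forall alpha, alpha \in P -> tsym T alpha) /\
  (forall alpha beta p q, alpha \in P -> beta \in P -> alpha != beta ->
     p \in alpha -> q \in beta -> ~ tsym T [set p; q]).

From HB Require Import structures.
From mathcomp Require Import all_boot all_order all_algebra.
From mathcomp Require Import reals.
From mathcomp Require Import all_classical all_reals.
From mathcomp Require Import topology normedtype matrix_normedtype derive.
From mathcomp Require Import ring lra.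
Set Implicit Arguments. Unset Strict Implicit. Unset Printing Implicit Defensive.
Import Order.TTheory GRing.Theory Num.Theory.
Import numFieldNormedType.Exports.
Local Open Scope ring_scope.

(* For unit vectors [u], [|T - s (u_1 o ... o u_d)|] is minimized at
   [s = <T, u>] with value [|T|^2 - <T, u>^2], so the best rank one
   approximations come from the maximizers of [<T, u>^2] on the product of
   spheres.  Fixing all factors of a maximizer [u] but [u_p] and [u_q], with
   [p] and [q] in the same block, leaves a symmetric bilinear form for which
   [(u_p, u_q)] is a maximizing pair; for a symmetric form the maximum is
   also attained at a pair [(z, z)].  Hence, by compactness, a maximizer that
   in addition maximizes [sum_beta |sum_(r in beta) u_r|^2] has equal factors
   within each block, and its rank one tensor is symmetric on every block. *)

Lemma exists_sign (R : realDomainType) (x : R) : exists2 e : R, e ^+ 2 = 1 & e * x = `|x|.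
Proof.
case: (ger0P x) => hx; first by exists 1; rewrite ?expr1n ?mul1r.
by exists (-1); rewrite ?sqrrN ?expr1n ?mulN1r.
Qed.

Section SymmetricForm.
Variables (R : rcfType) (m : nat).

Definition vdot (a b : nat -> R) : R := \sum_(k < m) a k * b k.

Definition unit_vec (a : nat -> R) : Prop := vdot a a = 1.

Definition basis_vec (k : nat) : nat -> R := fun l => (l == k)%:R.

Lemma vdotC a b : vdot a b = vdot b a.
Proof. by apply: eq_bigr => k _; rewrite mulrC. Qed.

Lemma vdotDl a1 a2 b : vdot (a1 \+ a2) b = vdot a1 b + vdot a2 b.
Proof. by rewrite -big_split; apply: eq_bigr => k _; rewrite mulrDl. Qed.

Lemma vdotDr a b1 b2 : vdot a (b1 \+ b2) = vdot a b1 + vdot a b2.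
Proof. by rewrite vdotC vdotDl !(vdotC a). Qed.

Lemma vdotZl s a b : vdot (fun k => s * a k) b = s * vdot a b.
Proof. by rewrite mulr_sumr; apply: eq_bigr => k _; rewrite mulrA. Qed.

Lemma vdotZr s a b : vdot a (fun k => s * b k) = s * vdot a b.
Proof. by rewrite vdotC vdotZl vdotC. Qed.

Lemma vdot_ge0 a : 0 <= vdot a a.
Proof. by apply: sumr_ge0 => k _; rewrite -expr2 sqr_ge0. Qed.

Lemma vdot_eq0 a : vdot a a = 0 -> forall k : 'I_m, a k = 0.
Proof.
move=> a0 k; apply/eqP; rewrite -sqrf_eq0 expr2; apply/eqP.
by apply: (psumr_eq0P _ a0) => // i _; rewrite -expr2 sqr_ge0.
Qed.

Lemma unit_vec_normalize a : 0 < vdot a a ->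
  unit_vec (fun k => (Num.sqrt (vdot a a))^-1 * a k).
Proof.
move=> a_gt0; rewrite /unit_vec vdotZl vdotZr mulrA -expr2 exprVn sqr_sqrtr ?(ltW a_gt0) //.
by rewrite mulVf ?gt_eqF.
Qed.

Variable form : (nat -> R) -> (nat -> R) -> R.
Hypothesis form_expand : forall a b, form a b = \sum_(k < m) a k * form (basis_vec k) b.
Hypothesis formC : forall a b, form a b = form b a.

Lemma formDl a1 a2 b : form (a1 \+ a2) b = form a1 b + form a2 b.
Proof. by rewrite !(form_expand _ b) -big_split; apply: eq_bigr => k _; rewrite mulrDl. Qed.

Lemma formZl s a b : form (fun k => s * a k) b = s * form a b.
Proof. by rewrite !(form_expand _ b) mulr_sumr; apply: eq_bigr => k _; rewrite mulrA. Qed.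

Lemma formDr a b1 b2 : form a (b1 \+ b2) = form a b1 + form a b2.
Proof. by rewrite formC formDl !(formC a). Qed.

Lemma formZr s a b : form a (fun k => s * b k) = s * form a b.
Proof. by rewrite formC formZl (formC a). Qed.

Definition form_max_at (u v : nat -> R) : Prop :=
  forall a b, unit_vec a -> unit_vec b -> form a b ^+ 2 <= form u v ^+ 2.

Lemma form_max_atC u v : form_max_at u v -> form_max_at v u.
Proof. by move=> uv a b ua ub; rewrite (formC v); apply: uv. Qed.

(* Testing the maximality against [a = g / |g|], where [g k = form (basis_vec k) v],
   gives [|g| <= |form u v|]; since [<u, g> = form u v], this forces [g = form u v * u]. *)
Lemma form_max_stationary u v : unit_vec u -> unit_vec v -> form_max_at u v ->
  forall a, form a v = form u v * vdot a u.
Proof.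
move=> uu uv uv_max.
pose g k := form (basis_vec k) v.
have formE a : form a v = vdot a g by rewrite form_expand.
set c := form u v.
have g_le : vdot g g <= c ^+ 2.
  have [->|g_neq0] := eqVneq (vdot g g) 0; first exact: sqr_ge0.
  have g_gt0 : 0 < vdot g g by rewrite lt_def g_neq0 vdot_ge0.
  have := uv_max _ _ (unit_vec_normalize g_gt0) uv.
  by rewrite formE vdotZl exprMn exprVn sqr_sqrtr ?(ltW g_gt0) // expr2 mulKf ?gt_eqF.
have gE : forall k : 'I_m, g k - c * u k = 0.
  apply: (@vdot_eq0 (fun k => g k - c * u k)); apply/eqP; rewrite eq_le vdot_ge0 andbT.
  have -> : vdot (fun k => g k - c * u k) (fun k => g k - c * u k)
            = vdot g g - 2 * c * vdot u g + c ^+ 2 * vdot u u.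
    rewrite /vdot !mulr_sumr -sumrB -big_split /=.
    by apply: eq_bigr => k _; ring.
  by rewrite -(formE u) -/c uu; lra.
move=> a; rewrite formE -vdotZr; apply: eq_bigr => k _.
by move/eqP: (gE k); rewrite subr_eq0 => /eqP ->.
Qed.

Lemma vdot_add_lt4 a b : unit_vec a -> unit_vec b -> (exists k : 'I_m, a k != b k) ->
  vdot (a \+ b) (a \+ b) < 4.
Proof.
move=> ua ub [k ab_neq].
set v := fun k => a k - b k.
have parallelogram : vdot (a \+ b) (a \+ b) + vdot v v = 2 * vdot a a + 2 * vdot b b.
  by rewrite /vdot !mulr_sumr -!big_split /=; apply: eq_bigr => i _; rewrite /v; ring.
have v_gt0 : 0 < vdot v v.
  rewrite lt_def vdot_ge0 andbT; apply: contra ab_neq => /eqP v0.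
  by rewrite -subr_eq0; apply/eqP; exact: vdot_eq0 v0 k.
by move: parallelogram; rewrite ua ub; lra.
Qed.

Lemma form_max_eigen_sum xp xq : unit_vec xp -> unit_vec xq -> form_max_at xp xq ->
  forall a, form a (xp \+ xq) = form xp xq * vdot a (xp \+ xq).
Proof.
move=> up uq pq_max a.
rewrite formDr vdotDr (form_max_stationary uq up (form_max_atC pq_max)).
by rewrite (form_max_stationary up uq pq_max) (formC xq); ring.
Qed.

(* [z] is [xp + xq] normalized, or [xp] when [xq = -xp], with its sign chosen
   so that [<S, z> >= 0]; the inequality says [|S + 2 z| > |S + xp + xq|]. *)
Lemma form_max_common_vector xp xq S : unit_vec xp -> unit_vec xq ->
  form_max_at xp xq -> (exists k : 'I_m, xp k != xq k) ->
  exists z, [/\ unit_vec z, form z z ^+ 2 = form xp xq ^+ 2 &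
    2 * vdot S (xp \+ xq) + vdot (xp \+ xq) (xp \+ xq) < 4 * vdot S z + 4].
Proof.
move=> up uq pq_max pq_neq; set c := form xp xq; set w := xp \+ xq.
have eigen := form_max_eigen_sum up uq pq_max.
have w_lt4 : vdot w w < 4 := vdot_add_lt4 up uq pq_neq.
suff [z [uz fz gain]] : exists z, [/\ unit_vec z, form z z ^+ 2 = c ^+ 2 &
    2 * vdot S w + vdot w w < 4 * `|vdot S z| + 4].
  have [e e2 eS] := exists_sign (vdot S z).
  exists (fun k => e * z k); split.
  - by rewrite /unit_vec vdotZl vdotZr mulrA -expr2 e2 mul1r.
  - by rewrite formZl formZr mulrA -expr2 e2 mul1r.
  - by rewrite vdotZr eS.
have [w0|w_neq0] := eqVneq (vdot w w) 0.
- have vdotw0 a : vdot a w = 0 by apply: big1 => k _; rewrite (vdot_eq0 w0) mulr0.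
  exists xp; split => //.
  + have : form xp w = 0 by rewrite eigen vdotw0 mulr0.
    by rewrite formDr -/c => /eqP; rewrite addr_eq0 => /eqP ->; rewrite sqrrN.
  + by rewrite vdotw0 w0; have := normr_ge0 (vdot S xp); lra.
- have w_gt0 : 0 < vdot w w by rewrite lt_def w_neq0 vdot_ge0.
  set r := Num.sqrt (vdot w w).
  have r_gt0 : 0 < r by rewrite sqrtr_gt0.
  have r2 : r ^+ 2 = vdot w w by rewrite sqr_sqrtr // ltW.
  have r_lt2 : r < 2 by rewrite -(ltr_pXn2r (_ : 0 < 2)%N) ?nnegrE ?ltW // r2; lra.
  exists (fun k => r^-1 * w k); split; first exact: unit_vec_normalize.
  + rewrite formZl formZr eigen -r2.
    by congr (_ ^+ 2); rewrite -/c; field; rewrite gt_eqF.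
  + rewrite (vdotZr r^-1 S w) normrM gtr0_norm ?invr_gt0 // -r2.
    have : 2 * `|vdot S w| <= 4 * (r^-1 * `|vdot S w|).
      rewrite mulrA ler_wpM2r // ler_pdivlMr //; lra.
    have := ler_norm (vdot S w); have : r ^+ 2 < 4 by rewrite r2.
    lra.
Qed.

End SymmetricForm.

Arguments basis_vec {R} k.

Lemma sum_idx_prod (R : comNzRingType) d (n : 'I_d -> nat)
    (F : forall j : 'I_d, 'I_(n j) -> R) :
  \sum_(i : idx n) \prod_(j < d) F j (i j) = \prod_(j < d) \sum_(k < n j) F j k.
Proof.
pose P_ j := [ffun k : 'I_(n j) => F j k].
rewrite (reindex (@dffun_of_fprod _ (fun j => 'I_(n j)))); last first.
  by apply: onW_bij; exact: dffun_of_fprod_bij.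
have -> : \sum_(t : fprod (fun j => 'I_(n j))) \prod_(j < d) F j (dffun_of_fprod t j)
   = \sum_(t : fprod (fun j => 'I_(n j))) \prod_(j in 'I_d) P_ j (t j).
  by apply: eq_bigr => t _; apply: eq_bigr => j _; rewrite !ffunE.
rewrite big_fprod /=.
rewrite -(bigA_distr_big_dep (tagged_with (fun j => 'I_(n j)))
  (fun i j => untag 0 (P_ i) j)).
apply: eq_bigr => j _.
rewrite [RHS](eq_bigr (fun k => P_ j k)); last by move=> k _; rewrite ffunE.
by rewrite (big_tag (fun i k => P_ i k) j).
Qed.

Lemma on_sphereE (R : realType) m (x : 'I_m -> R) :
  on_sphere x <-> \sum_(k < m) x k ^+ 2 = 1.
Proof.
have x2_ge0 : 0 <= \sum_(k < m) x k ^+ 2 by apply: sumr_ge0 => k _; exact: sqr_ge0.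
rewrite /on_sphere; split => [x1|->]; last exact: sqrtr1.
by rewrite -(sqr_sqrtr x2_ge0) x1 expr1n.
Qed.

Section Contraction.
Variables (R : realType) (d : nat) (n : 'I_d -> nat) (T : tensor R n).
Local Notation vecs := (forall j : 'I_d, 'I_(n j) -> R).

Definition tcontract (x : vecs) : R := \sum_(i : idx n) T i * \prod_(j < d) x j (i j).

(* [x j] as a vector indexed by [nat], zero beyond [n j]: this lets vectors
   of factors with the same length be compared and added. *)
Definition padded (x : vecs) (j : 'I_d) (k : nat) : R :=
  if insub k is Some o then x j o else 0.

Lemma padded_ord x j (o : 'I_(n j)) : padded x j o = x j o.
Proof. by rewrite /padded valK. Qed.

Lemma padded_out x j k : (n j <= k)%N -> padded x j k = 0.
Proof. by move=> h; rewrite /padded insubN // -leqNgt. Qed.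

Lemma on_sphere_unit_vec x j : on_sphere (x j) <-> unit_vec (n j) (padded x j).
Proof.
rewrite on_sphereE /unit_vec.
suff -> : vdot (n j) (padded x j) (padded x j) = \sum_(k < n j) x j k ^+ 2 by [].
by apply: eq_bigr => k _; rewrite padded_ord expr2.
Qed.

Lemma tinner_sub_rank1 s x : tinner (tsub T (rank1 s x)) (tsub T (rank1 s x)) =
  tinner T T - 2 * s * tcontract x + s ^+ 2 * \prod_(j < d) \sum_(k < n j) x j k ^+ 2.
Proof.
rewrite -sum_idx_prod /tinner /tsub /rank1 /tcontract.
rewrite !mulr_sumr -sumrB -big_split /=; apply: eq_bigr => i _.
by rewrite prodrXl; ring.
Qed.

Lemma tinner_sub_rank1_sphere s x : (forall j, on_sphere (x j)) ->
  tinner (tsub T (rank1 s x)) (tsub T (rank1 s x)) =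
  tinner T T - 2 * s * tcontract x + s ^+ 2.
Proof.
by move=> x1; rewrite tinner_sub_rank1 big1 ?mulr1 // => j _; apply/on_sphereE.
Qed.

Lemma best_rank1_of_max u : (forall j, on_sphere (u j)) ->
  (forall x, (forall j, on_sphere (x j)) -> tcontract x ^+ 2 <= tcontract u ^+ 2) ->
  best_rank1 T (rank1 (tcontract u) u).
Proof.
move=> u1 u_max; exists (tcontract u), u; split => //; split => // s x x1.
rewrite /tnorm ler_sqrt; last by apply: sumr_ge0 => i _; rewrite -expr2 sqr_ge0.
rewrite !tinner_sub_rank1_sphere //.
have := u_max x x1; have := sqr_ge0 (s - tcontract x); nra.
Qed.

Definition set2 (p q : 'I_d) (u : vecs) (a b : nat -> R) : vecs :=
  fun j k => if j == p then a k else if j == q then b k else u j k.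
Arguments set2 : clear implicits.

Section TwoFactors.
Variables (p q : 'I_d).
Hypothesis pq : p != q.

Lemma prod_split2 (F : 'I_d -> R) :
  \prod_(j < d) F j = F p * F q * \prod_(j < d | (j != p) && (j != q)) F j.
Proof. by rewrite (bigD1 p) //= (bigD1 q) 1?eq_sym //= mulrA. Qed.

Lemma tcontract_set2 u a b : tcontract (set2 p q u a b) =
  \sum_(i : idx n)
    a (i p) * b (i q) * (T i * \prod_(j < d | (j != p) && (j != q)) u j (i j)).
Proof.
apply: eq_bigr => i _; rewrite prod_split2 /set2 eqxx eq_sym (negbTE pq) eqxx.
rewrite (eq_bigr (fun j => u j (i j))); first by ring.
by move=> j /andP[/negbTE -> /negbTE ->].
Qed.

Lemma tcontract_set2_expand u a b : tcontract (set2 p q u a b) =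
  \sum_(k < n p) a k * tcontract (set2 p q u (basis_vec k) b).
Proof.
rewrite tcontract_set2; under [RHS]eq_bigr do rewrite tcontract_set2 mulr_sumr.
rewrite exchange_big /=; apply: eq_bigr => i _.
rewrite (bigD1 (i p)) //= [X in _ + X]big1 ?addr0 => [|k ki].
  by rewrite /basis_vec eqxx mul1r !mulrA.
rewrite /basis_vec (_ : (i p : nat) == k = false) ?mul0r ?mulr0 //.
by rewrite eq_sym; exact: negbTE ki.
Qed.

Hypothesis npq : n p = n q.

Definition tswap_nat (i : idx n) (j : 'I_d) : nat :=
  if j == p then i q : nat else if j == q then i p : nat else i j.

Lemma tswap_nat_lt i j : (tswap_nat i j < n j)%N.
Proof.
rewrite /tswap_nat; case: eqP => [->|_]; first by rewrite npq.
by case: eqP => [->|_]; [rewrite -npq|].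
Qed.

Definition tswap (i : idx n) : idx n := finfun (fun j => insubd (i j) (tswap_nat i j)).

Lemma tswap_val i j : (tswap i j : nat) = tswap_nat i j.
Proof. by rewrite ffunE insubdK //; apply: tswap_nat_lt. Qed.

Lemma tswapK : involutive tswap.
Proof.
move=> i; apply/ffunP => j; apply: val_inj.
rewrite /= !tswap_val /tswap_nat !tswap_val /tswap_nat eqxx eq_sym (negbTE pq) eqxx.
by case: eqP => [->|_] //; case: eqP => [->|_].
Qed.

Lemma tsym_tswap alpha : tsym T alpha -> p \in alpha -> q \in alpha ->
  forall i, T (tswap i) = T i.
Proof.
move=> T_sym p_in q_in i; apply: (T_sym p q p_in q_in).2.
- by rewrite tswap_val /tswap_nat eqxx.
- by rewrite tswap_val /tswap_nat eq_sym (negbTE pq) eqxx.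
- move=> j jp jq; apply: val_inj.
  by rewrite /= tswap_val /tswap_nat (negbTE jp) (negbTE jq).
Qed.

Lemma tcontract_set2C u a b : (forall i, T (tswap i) = T i) ->
  tcontract (set2 p q u a b) = tcontract (set2 p q u b a).
Proof.
move=> T_swap; rewrite !tcontract_set2 (reindex_inj (can_inj tswapK)).
apply: eq_bigr => i _; rewrite T_swap !tswap_val /tswap_nat eqxx eq_sym (negbTE pq) eqxx.
rewrite (eq_bigr (fun j => u j (i j))); first by ring.
move=> j /andP[jp jq]; congr (u j _); apply: val_inj.
by rewrite /= tswap_val /tswap_nat (negbTE jp) (negbTE jq).
Qed.

End TwoFactors.

Lemma rank1_tsym a u (alpha : {set 'I_d}) :
  (forall p q, p \in alpha -> q \in alpha -> n p = n q /\ padded u p = padded u q) ->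
  tsym (rank1 a u) alpha.
Proof.
move=> u_eq p q pa qa; have [npq upq] := u_eq p q pa qa.
split => // i i' i'p i'q i'_other; rewrite /rank1; congr (_ * _).
have [pq0|pq] := eqVneq p q.
  subst q; suff -> : i' = i by []; apply/ffunP => j.
  by have [->|jp] := eqVneq j p; [apply: val_inj | apply: i'_other].
rewrite !(prod_split2 pq) [u p (i p) * _]mulrC; congr (_ * _ * _).
- by rewrite -[LHS]padded_ord i'p upq padded_ord.
- by rewrite -[LHS]padded_ord i'q -upq padded_ord.
- by apply: eq_bigr => j /andP[jp jq]; rewrite i'_other.
Qed.

Lemma set2_on_sphere p q u a b : n p = n q -> (forall j, on_sphere (u j)) ->
  unit_vec (n p) a -> unit_vec (n p) b -> forall j, on_sphere (set2 p q u a b j).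
Proof.
move=> npq u1 ua ub j; apply/on_sphereE; rewrite /set2.
case: eqP => [->|_]; first by rewrite -ua; apply: eq_bigr => k _; rewrite expr2.
case: eqP => [->|_]; last exact/on_sphereE.
by rewrite -npq -ub; apply: eq_bigr => k _; rewrite expr2.
Qed.

Lemma set2_padded p q u : set2 p q u (padded u p) (padded u q) = u.
Proof.
apply: functional_extensionality_dep => j; apply: funext => k; rewrite /set2.
case: eqP => [e|_]; first by subst j; rewrite padded_ord.
by case: eqP => [e|_] //; subst j; rewrite padded_ord.
Qed.

Lemma padded_set2_other p q u a b r : r != p -> r != q ->
  padded (set2 p q u a b) r = padded u r.
Proof.
move=> rp rq; apply: funext => k; rewrite /padded; case: insub => // o.
by rewrite /set2 (negbTE rp) (negbTE rq).
Qed.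

Lemma padded_set2_l p q u a b k : (k < n p)%N -> padded (set2 p q u a b) p k = a k.
Proof. by move=> kn; rewrite -[k]/(Ordinal kn : nat) padded_ord /set2 eqxx. Qed.

Lemma padded_set2_r p q u a b k : q != p -> (k < n q)%N ->
  padded (set2 p q u a b) q k = b k.
Proof.
by move=> qp kn; rewrite -[k]/(Ordinal kn : nat) padded_ord /set2 (negbTE qp) eqxx.
Qed.

Definition max_dim : nat := \max_(j < d) n j.

Definition block_sq (x : vecs) (beta : {set 'I_d}) : R :=
  \sum_(k < max_dim) (\sum_(r in beta) padded x r k) ^+ 2.

Definition block_energy (P : {set {set 'I_d}}) (x : vecs) : R :=
  \sum_(beta in P) block_sq x beta.

Lemma block_sq_set2_notin p q u a b (beta : {set 'I_d}) : p \notin beta -> q \notin beta ->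
  block_sq (set2 p q u a b) beta = block_sq u beta.
Proof.
move=> pNb qNb; apply: eq_bigr => k _; congr (_ ^+ 2); apply: eq_bigr => r rb.
by rewrite padded_set2_other //;
  [apply: contraNneq pNb => <- | apply: contraNneq qNb => <-].
Qed.

Lemma block_sq_set2 p q u z (beta : {set 'I_d}) :
  p \in beta -> q \in beta -> p != q -> n p = n q ->
  let S k := \sum_(r | (r \in beta) && (r != p) && (r != q)) padded u r k in
  let w := padded u p \+ padded u q in
  block_sq (set2 p q u z z) beta - block_sq u beta =
  4 * vdot (n p) S z + 4 * vdot (n p) z z - 2 * vdot (n p) S w - vdot (n p) w w.
Proof.
move=> pb qb pq npq S w.
have block_sumE x k : \sum_(r in beta) padded x r k = padded x p k + padded x q k +
    \sum_(r | (r \in beta) && (r != p) && (r != q)) padded x r k.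
  by rewrite (bigD1 p) //= (bigD1 q) /=; [rewrite addrA | rewrite qb eq_sym].
pose D k := (\sum_(r in beta) padded (set2 p q u z z) r k) ^+ 2 -
            (\sum_(r in beta) padded u r k) ^+ 2.
have others x k :
    \sum_(r | (r \in beta) && (r != p) && (r != q)) padded (set2 p q u x x) r k = S k.
  by rewrite /S; apply: eq_bigr => r /andP[/andP[_ rp] rq]; rewrite padded_set2_other.
have D0 k : (n p <= k)%N -> D k = 0.
  by move=> kn; rewrite /D !block_sumE !padded_out -?npq // others subrr.
have n_le : (n p <= max_dim)%N by rewrite /max_dim (bigD1 p) //= leq_maxl.
have -> : block_sq (set2 p q u z z) beta - block_sq u beta = \sum_(k < n p) D k.
  rewrite /block_sq -sumrB (big_ord_widen _ D n_le) [RHS]big_mkcond.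
  by apply: eq_bigr => k _; case: ltnP => // /D0.
rewrite /vdot !mulr_sumr -big_split -!sumrB /=; apply: eq_bigr => k _.
rewrite /D !block_sumE padded_set2_l // padded_set2_r ?(eq_sym q) -?npq // others /w /=.
by rewrite -[\sum_(r | _) padded u r k]/(S k); ring.
Qed.

Lemma block_energy_set2 (P : {set {set 'I_d}}) beta p q u a b :
  finset.trivIset P -> beta \in P -> p \in beta -> q \in beta ->
  block_energy P (set2 p q u a b) - block_energy P u =
  block_sq (set2 p q u a b) beta - block_sq u beta.
Proof.
move=> tP bP pb qb; rewrite /block_energy (bigD1 beta) //= [X in _ - X](bigD1 beta) //=.
suff -> : \sum_(al in P | al != beta) block_sq (set2 p q u a b) al =
          \sum_(al in P | al != beta) block_sq u al by ring.
apply: eq_bigr => al /andP[aP ab].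
have notin r : r \in beta -> r \notin al.
  move=> rb; apply: contra ab => ra.
  by rewrite -(def_pblock tP aP ra) (def_pblock tP bP rb).
by apply: block_sq_set2_notin; apply: notin.
Qed.

Lemma lex_max_padded_eq (P : {set {set 'I_d}}) u : finset.trivIset P ->
  {in P, forall beta, tsym T beta} -> (forall j, on_sphere (u j)) ->
  (forall x, (forall j, on_sphere (x j)) -> tcontract x ^+ 2 <= tcontract u ^+ 2) ->
  (forall x, (forall j, on_sphere (x j)) -> tcontract x ^+ 2 = tcontract u ^+ 2 ->
     block_energy P x <= block_energy P u) ->
  forall beta, beta \in P -> forall p q, p \in beta -> q \in beta ->
  padded u p = padded u q.
Proof.
move=> tP T_sym u1 u_max u_lex beta bP p q pb qb.
have [npq _] := T_sym beta bP p q pb qb.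
have [<-|pq] := eqVneq p q; first by [].
apply: funext => k; apply/eqP/negPn/negP => neq.
have kn : (k < n p)%N.
  by rewrite ltnNge; apply: contra neq => kn; rewrite !padded_out -?npq.
have up : unit_vec (n p) (padded u p) by apply/on_sphere_unit_vec.
have uq : unit_vec (n p) (padded u q) by rewrite npq; apply/on_sphere_unit_vec.
pose form a b := tcontract (set2 p q u a b).
have formC a b : form a b = form b a.
  exact/tcontract_set2C/(tsym_tswap pq npq (T_sym _ bP)).
have pq_max : form_max_at (n p) form (padded u p) (padded u q).
  by move=> a b ua ub; rewrite /form set2_padded; apply/u_max/set2_on_sphere.
set S := fun k => \sum_(r | (r \in beta) && (r != p) && (r != q)) padded u r k.
have [z [uz fz gain]] := @form_max_common_vector _ (n p) form
  (tcontract_set2_expand pq u) formC _ _ S up uq pq_max (ex_intro _ (Ordinal kn) neq).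
have := u_lex _ (set2_on_sphere npq u1 uz uz).
rewrite -/(form z z) fz /form set2_padded => /(_ erefl).
apply/negP; rewrite -ltNge -subr_gt0.
by rewrite (block_energy_set2 _ _ _ tP bP pb qb) block_sq_set2 // uz; lra.
Qed.

End Contraction.

Local Open Scope classical_set_scope.
Local Open Scope ring_scope.

Lemma compact_lex_max (T : topologicalType) (R : realType) (K : set T) (F G : T -> R) :
  compact K -> K !=set0 -> continuous F -> continuous G ->
  exists2 c, K c & (forall t, K t -> F t <= F c) /\
                   (forall t, K t -> F t = F c -> G t <= G c).
Proof.
move=> K_compact K0 F_cont G_cont.
have [c /set_mem Kc c_max] := compact_EVT_max K0 K_compact (continuous_subspaceT F_cont).
have F_max t : K t -> F t <= F c by move=> Kt; apply/c_max/mem_set.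
set Kmax := K `&` F @^-1` [set F c].
have Kmax_compact : compact Kmax.
  apply: compact_closedI K_compact _; apply: preimage_closed; last exact: closed_eq.
  by move=> x _; apply: F_cont.
have [c' /set_mem [Kc' Fc'] c'_max] :=
  compact_EVT_max (ex_intro _ c (conj Kc erefl)) Kmax_compact (continuous_subspaceT G_cont).
exists c' => //; rewrite Fc'; split => // t Kt Ft.
by apply/c'_max/mem_set; split.
Qed.

Lemma continuous_sum (T : topologicalType) (R : realType) (I : Type) (r : seq I)
    (P : pred I) (F : I -> T -> R) :
  (forall i, continuous (F i)) -> continuous (fun x => \sum_(i <- r | P i) F i x).
Proof.
move=> F_cont; elim: r => [|i r IH].
  by under eq_fun do rewrite big_nil; exact: cst_continuous.
under eq_fun do rewrite big_cons.
by case: (P i) => // x; apply: continuousD; [exact: F_cont | exact: IH].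
Qed.

Lemma continuous_prod (T : topologicalType) (R : realType) (I : Type) (r : seq I)
    (P : pred I) (F : I -> T -> R) :
  (forall i, continuous (F i)) -> continuous (fun x => \prod_(i <- r | P i) F i x).
Proof.
move=> F_cont; elim: r => [|i r IH].
  by under eq_fun do rewrite big_nil; exact: cst_continuous.
under eq_fun do rewrite big_cons.
by case: (P i) => // x; apply: continuousM; [exact: F_cont | exact: IH].
Qed.

Lemma continuous_sqr (T : topologicalType) (R : realType) (f : T -> R) :
  continuous f -> continuous (fun x => f x ^+ 2).
Proof. by move=> f_cont x; apply: continuousM; apply: f_cont. Qed.

Section Flatten.
Variables (R : realType) (d : nat) (n : 'I_d -> nat).
Local Notation vecs := (forall j : 'I_d, 'I_(n j) -> R).
Local Notation coord := {j : 'I_d & 'I_(n j)}.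
Local Notation rvec := 'rV[R]_#|{: coord}|.

Definition unflatten (v : rvec) : vecs :=
  fun j k => v ord0 (enum_rank (Tagged (fun j => 'I_(n j)) k)).
Arguments unflatten : clear implicits.

Definition flatten (x : vecs) : rvec := \row_i x (tag (enum_val i)) (tagged (enum_val i)).

Lemma flattenK : cancel flatten unflatten.
Proof.
move=> x; apply: functional_extensionality_dep => j; apply: funext => k.
by rewrite /unflatten mxE enum_rankK.
Qed.

Lemma continuous_unflatten j k : continuous (fun v : rvec => unflatten v j k).
Proof. exact: coord_continuous. Qed.

Definition spheres : set rvec := [set v | forall j, on_sphere (unflatten v j)].

Lemma closed_spheres : closed spheres.
Proof.
have -> : spheres = \bigcap_(j in [set: 'I_d])
    ((fun v => \sum_(k < n j) unflatten v j k ^+ 2) @^-1` [set 1]).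
  by apply/seteqP; split => v /= v1 j; [move=> _ |]; apply/on_sphereE/v1.
apply: closed_bigI => j _; apply: preimage_closed; last exact: closed_eq.
move=> v _; apply: continuous_sum => k.
exact/continuous_sqr/continuous_unflatten.
Qed.

Lemma compact_spheres : compact spheres.
Proof.
apply: (subclosed_compact closed_spheres
  (rV_compact (fun _ => @segment_compact R (-1) 1))) => v v1 i /=.
rewrite in_itv /= -[i]enum_valK; case: (enum_val i) => j k.
have : unflatten v j k ^+ 2 <= 1.
  rewrite -(proj1 (on_sphereE _) (v1 j)) (bigD1 k) //= lerDl.
  by apply: sumr_ge0 => k' _; exact: sqr_ge0.
by rewrite /unflatten => x2_le1; apply/andP; split; nra.
Qed.

Lemma exists_lex_max_on_spheres (F G : vecs -> R) : (forall j, (0 < n j)%N) ->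
  continuous (F \o unflatten) -> continuous (G \o unflatten) ->
  exists u : vecs, [/\ forall j, on_sphere (u j),
    forall x, (forall j, on_sphere (x j)) -> F x <= F u &
    forall x, (forall j, on_sphere (x j)) -> F x = F u -> G x <= G u].
Proof.
move=> n_gt0 F_cont G_cont.
have flatten1 x : (forall j, on_sphere (x j)) -> spheres (flatten x).
  by move=> x1 j; rewrite flattenK.
pose e : vecs := fun j k => ((k : nat) == 0)%:R.
have e1 j : on_sphere (e j).
  apply/on_sphereE; rewrite (bigD1 (Ordinal (n_gt0 j))) //= big1 ?addr0 => [|k k0].
    by rewrite /e eqxx expr1n.
  by rewrite /e (_ : (k : nat) == 0 = false) ?expr0n //; exact: negbTE k0.
have [v v1 [F_max G_max]] :=
  compact_lex_max compact_spheres (ex_intro _ _ (flatten1 e e1)) F_cont G_cont.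
exists (unflatten v); split => // x x1; rewrite -(flattenK x).
  exact/F_max/flatten1.
exact/G_max/flatten1.
Qed.

Lemma continuous_padded j k : continuous (fun v : rvec => padded (unflatten v) j k).
Proof.
rewrite /padded; case: insub => [o|]; [exact: continuous_unflatten | exact: cst_continuous].
Qed.

Lemma continuous_tcontract_sqr (T : tensor R n) :
  continuous (fun v : rvec => tcontract T (unflatten v) ^+ 2).
Proof.
apply/continuous_sqr/continuous_sum => i w.
apply: continuousM; first exact: cst_continuous.
by apply: continuous_prod => j; apply: continuous_unflatten.
Qed.

Lemma continuous_block_energy (P : {set {set 'I_d}}) :
  continuous (fun v : rvec => block_energy P (unflatten v)).
Proof.
apply: continuous_sum => beta; apply: continuous_sum => k.
by apply/continuous_sqr/continuous_sum => r; apply: continuous_padded.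
Qed.

End Flatten.

Theorem theorem1p1 (R : realType) (d : nat) (n : 'I_d -> nat)
  (T : tensor R n) (P : {set {set 'I_d}}) :
  (2 <= d)%N -> (forall j, (1 <= n j)%N) ->
  T <> (fun _ => 0) ->
  sym_decomposition T P ->
  exists A : tensor R n, best_rank1 T A /\ forall alpha, alpha \in P -> tsym A alpha.
Proof.
move=> _ n_gt0 _ [/and3P[_ P_triv _] [T_sym _]].
have [u [u1 u_max u_lex]] := exists_lex_max_on_spheres
  (F := fun x => tcontract T x ^+ 2) (G := block_energy P) n_gt0
  (continuous_tcontract_sqr (T := T)) (continuous_block_energy (P := P)).
exists (rank1 (tcontract T u) u); split; first exact: best_rank1_of_max.
move=> alpha aP; apply: rank1_tsym => p q pa qa.
split; first exact: (T_sym alpha aP p q pa qa).1.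
exact: lex_max_padded_eq P_triv T_sym u1 u_max u_lex alpha aP p q pa qa.
Qed.
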